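(* For every $n\ge2$, $$LLT_n[X;q]\;=\;\sum_{k=1}^n(-1)^{k-1}(q;q)_{k-1}\begin{bmatrix}n-1\\k-1\end{bmatrix}_q e_k[X]\;LLT_{n-k}[X;q].$$
   Context: $(q;q)_k=(1-q)\cdots(1-q^k)$, and $\begin{bmatrix}n\\k\end{bmatrix}_q=\frac{(q;q)_n}{(q;q)_k(q;q)_{n-k}}$ is the $q$-binomial coefficient. For $m\ge1$, $LLT_m[X;q]$ is the LLT polynomial $LLT_D[X;q]$ of the zero-area Dyck path $D=(NE)^m$ in the $m\times m$ lattice square, and $LLT_0=1$. The LLT polynomial of a Dyck path $D$ in the $m\times m$ square is defined as follows. Let $a_i$ be the number of full cells in row $i$ between $D$ and the diagonal. A parking function on $D$ labels the cells right of the North steps bijectively by cars $1,\dots,m$, increasing up columns; $c_i$ is the car in row $i$. Pairs of rows $i<j$ give a dinv if either $a_i=a_j$ and $c_i<c_j$, or $a_i=a_j+1$ and $c_i>c_j$; $\mathrm{dinv}(PF)$ counts these. $\sigma(PF)$ reads the cars by diagonals from highest to lowest, each diagonal from right to left. $\mathrm{pides}(PF)$ is the composition encoding the descent set of $\sigma(PF)^{-1}$. Then $LLT_D[X;q]=\sum_{PF}q^{\mathrm{dinv}(PF)}F_{\mathrm{pides}(PF)}[X]$, with $F_\alpha$ Gessel's fundamental quasisymmetric functions. (Equivalently, $LLT_m[X;q]=(q;q)_m\,h_m[X/(1-q)]$ in plethystic notation.) *)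

From HB Require Import structures.
From mathcomp Require Import all_boot all_order all_algebra all_fingroup.
From mathcomp Require Import mpoly.
Set Implicit Arguments. Unset Strict Implicit. Unset Printing Implicit Defensive.
Import GRing.Theory.
Local Open Scope ring_scope.

(* Coefficient ring: Q[q] = {poly rat}, q = 'X (the polynomial variable).
   Symmetric functions are evaluated in N variables x_0..x_(N-1):
   an identity of symmetric functions holds iff it holds in N variables
   for every N. *)

Definition qpoch (k : nat) : {poly rat} := \prod_(i < k) (1 - 'X ^+ i.+1).

Definition qbinom (n k : nat) : {poly rat} :=
  qpoch n %/ (qpoch k * qpoch (n - k)).

Section LLT.
Variable N : nat.

(* Gessel's fundamental quasisymmetric function F in N variables of degree m,
   indexed by its descent set: D j (for a gap j, 0 <= j < m-1, i.e. between
   positions j+1 and j+2 in 1-indexed terms) says the composition has a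
   descent there. *)
Definition fundQ (m : nat) (D : nat -> bool) : {mpoly {poly rat}[N]} :=
  \sum_(w : {ffun 'I_m -> 'I_N} |
        let s := [seq (w j : nat) | j <- enum 'I_m] in
        all (fun j => if D j then (nth 0 s j < nth 0 s j.+1)%N
                      else (nth 0 s j <= nth 0 s j.+1)%N) (iota 0 m.-1))
    \prod_(j < m) 'X_(w j).

(* A Dyck path D in the m x m square is encoded by its area sequence
   a = [a_1; ...; a_m] (a_i = number of full cells in row i between D and the
   diagonal), m = size a.  Rows are indexed 0..m-1 and cars 0..m-1 (the shift
   by one of the car labels is order preserving). *)
Section Path.
Variable a : seq nat.
Local Notation m := (size a).
Local Notation ar i := (nth 0 a i).

Definition cars (c : {perm 'I_m}) : seq nat := [seq (c i : nat) | i <- enum 'I_m].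

(* parking function: rows i, i+1 are in the same column iff a_(i+1) = a_i + 1
   (two consecutive North steps); cars increase up columns. *)
Definition is_PF (c : {perm 'I_m}) : bool :=
  all (fun i => (ar i.+1 == (ar i).+1) ==> (nth 0 (cars c) i < nth 0 (cars c) i.+1)%N)
      (iota 0 m.-1).

Definition dinv (c : {perm 'I_m}) : nat :=
  #|[set ij : 'I_m * 'I_m | (ij.1 < ij.2)%N &&
      (((ar ij.1 == ar ij.2) && (c ij.1 < c ij.2)%N) ||
       ((ar ij.1 == (ar ij.2).+1) && (c ij.2 < c ij.1)%N))]|.

(* reading order: diagonals from highest to lowest (larger a_i first), each
   diagonal from right to left (on a fixed diagonal the column grows with the
   row, so larger row index first). *)
Definition reading_rows : seq nat :=
  sort (fun i j => (ar j < ar i)%N || ((ar i == ar j) && (j <= i)%N)) (iota 0 m).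

Definition sigmaPF (c : {perm 'I_m}) : seq nat :=
  [seq nth 0 (cars c) i | i <- reading_rows].

(* descent set of sigma^{-1}: gap j is a descent iff car j+1 occurs before
   car j in the word sigma. *)
Definition pides (c : {perm 'I_m}) (j : nat) : bool :=
  (index j.+1 (sigmaPF c) < index j (sigmaPF c))%N.

Definition LLT_D : {mpoly {poly rat}[N]} :=
  \sum_(c : {perm 'I_m} | is_PF c) ('X ^+ dinv c) *: fundQ m (pides c).

End Path.

(* LLT_m: zero-area Dyck path (NE)^m, area sequence (0,...,0); LLT_0 = 1. *)
Definition LLTm (m : nat) : {mpoly {poly rat}[N]} :=
  if m is 0 then 1 else LLT_D (nseq m 0%N).

Definition elemsym (k : nat) : {mpoly {poly rat}[N]} := mesym N {poly rat} k.

End LLT.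

Arguments LLTm N m : clear implicits.
Arguments elemsym N k : clear implicits.
Arguments LLT_D N a : clear implicits.
Arguments fundQ N m D : clear implicits.

From HB Require Import structures.
From mathcomp Require Import all_boot all_order all_algebra all_fingroup.
From mathcomp Require Import mpoly.
From mathcomp Require Import ring zify.
Import GRing.Theory.
Local Open Scope ring_scope.

(* For the zero-area path all rows lie on one diagonal, so standardisation
   identifies LLT_n with the sum of q^(asc w) x^w over all words w of length n,
   where asc w counts the pairs i < j with w_i < w_j.  Peeling off the first
   letter shows that the coefficient of x^al in it is the q-multinomial
   coefficient (q;q)_n / prod_i (q;q)_(al_i).  After extracting the
   coefficient of x^al on both sides and clearing these denominators, the
   identity becomes
     (q;q)_n = (q;q)_(n-1) sum_k (-1)^(k-1) e_k(1 - q^al_1, ..., 1 - q^al_N),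
   and the alternating sum equals 1 - prod_i q^al_i = 1 - q^n. *)

Set Implicit Arguments. Unset Strict Implicit. Unset Printing Implicit Defensive.

Lemma qpoch0 : qpoch 0 = 1.
Proof. by rewrite /qpoch big_ord0. Qed.

Lemma qpochS k : qpoch k.+1 = qpoch k * (1 - 'X ^+ k.+1).
Proof. by rewrite /qpoch big_ord_recr. Qed.

Lemma qpoch_neq0 k : qpoch k != 0.
Proof.
apply/prodf_neq0 => i _; apply/negP => /eqP /(congr1 (fun p : {poly rat} => p`_0)).
by rewrite coefB coef1 coefXn /= subr0 coef0 => /eqP; rewrite oner_eq0.
Qed.

(* The q-Pascal recurrence; it shows that the quotient defining [qbinom] is exact. *)
Fixpoint qbin (n k : nat) : {poly rat} :=
  match n, k with
  | _, 0 => 1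
  | 0, _.+1 => 0
  | n'.+1, k'.+1 => qbin n' k' + 'X ^+ k'.+1 * qbin n' k
  end.

Lemma qbin_eq0 n k : (n < k)%N -> qbin n k = 0.
Proof. by elim: n k => [|n IH] [|k] //= lt_nk; rewrite !IH ?mulr0 ?addr0 // ltnW. Qed.

Lemma qbin_qpoch n k : (k <= n)%N -> qbin n k * qpoch k * qpoch (n - k) = qpoch n.
Proof.
elim: n k => [|n IH] [|k] //=; rewrite ?qpoch0 ?subn0 ?mul1r // ltnS => le_kn.
have lower : qbin n k * qpoch k.+1 * qpoch (n - k) = qpoch n * (1 - 'X ^+ k.+1).
  rewrite qpochS -(IH k le_kn).
  by move: (qbin n k) (qpoch k) (qpoch (n - k)) (1 - 'X ^+ k.+1 : {poly rat}) => a b c d; ring.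
rewrite subSS mulrDl mulrDl lower [RHS]qpochS.
case: (ltngtP k n) le_kn => // [lt_kn|->] _; last first.
  by rewrite qbin_eq0 // mulr0 !mul0r addr0.
have upper : 'X ^+ k.+1 * qbin n k.+1 * qpoch k.+1 * qpoch (n - k)
    = qpoch n * ('X ^+ k.+1 * (1 - 'X ^+ (n - k))).
  rewrite -(IH k.+1 lt_kn) -(subnSK lt_kn) (qpochS (n - k.+1)).
  move: (qbin n k.+1) (qpoch k.+1) (qpoch (n - k.+1)) ('X ^+ k.+1 : {poly rat}).
  by move: (1 - 'X ^+ (n - k.+1).+1 : {poly rat}) => e a b c d; ring.
have -> : 'X ^+ n.+1 = 'X ^+ k.+1 * 'X ^+ (n - k) :> {poly rat}.
  by rewrite -exprD addSn subnKC // ltnW.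
rewrite upper -mulrDr.
by move: (qpoch n) ('X ^+ k.+1 : {poly rat}) ('X ^+ (n - k) : {poly rat}) => a b c; ring.
Qed.

Lemma qbinom_qpoch n k : (k <= n)%N -> qbinom n k * qpoch k * qpoch (n - k) = qpoch n.
Proof.
move=> le_kn; suff -> : qbinom n k = qbin n k by exact: qbin_qpoch.
rewrite /qbinom -(qbin_qpoch le_kn) -mulrA mulpK //.
by rewrite mulf_neq0 // qpoch_neq0.
Qed.

Lemma qpoch_qbinom_pred n k : (1 <= k <= n)%N ->
  qpoch k.-1 * qbinom n.-1 k.-1 * qpoch (n - k) = qpoch n.-1.
Proof.
case: k => // k; case: n => // n; rewrite /= subSS ltnS => le_kn.
by rewrite -(qbinom_qpoch le_kn) [qpoch k * _]mulrC.
Qed.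

Section Words.
Variable N : nat.

Definition asc m (u : {ffun 'I_m -> 'I_N}) : nat :=
  (\sum_(i < m) \sum_(j < m) ((i < j) && (u i < u j)))%N.

Definition content m (u : {ffun 'I_m -> 'I_N}) : 'X_{1..N} := (\sum_(r < m) U_(u r))%MM.

Definition word_gen m : {mpoly {poly rat}[N]} :=
  \sum_(u : {ffun 'I_m -> 'I_N}) ('X ^+ asc u) *: 'X_[content u].

Definition word_qcount m (al : 'X_{1..N}) : {poly rat} :=
  \sum_(u : {ffun 'I_m -> 'I_N} | content u == al) 'X ^+ asc u.

Definition qpoch_mnm (al : 'X_{1..N}) : {poly rat} := \prod_(i < N) qpoch (al i).

Lemma mcoeff_word_gen m al : (word_gen m)@_al = word_qcount m al.
Proof.
rewrite /word_gen raddf_sum /word_qcount [RHS]big_mkcond /=; apply: eq_bigr => u _.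
by rewrite mcoeffZ mcoeffX; case: eqP => _; rewrite ?mulr1 ?mulr0.
Qed.

Lemma mdeg_content m (u : {ffun 'I_m -> 'I_N}) : mdeg (content u) = m.
Proof.
rewrite /content mdeg_sum; under eq_bigr do rewrite mdeg1.
by rewrite sum_nat_const card_ord muln1.
Qed.

Lemma word_qcount_eq0 m al : mdeg al != m -> word_qcount m al = 0.
Proof.
move=> deg_al; rewrite /word_qcount big_pred0 // => u; apply/negP => /eqP al_u.
by move: deg_al; rewrite -al_u mdeg_content eqxx.
Qed.

Definition wcons m (x : 'I_N) (u : {ffun 'I_m -> 'I_N}) : {ffun 'I_m.+1 -> 'I_N} :=
  [ffun r => if unlift ord0 r is Some r' then u r' else x].

Lemma wcons0 m x (u : {ffun 'I_m -> 'I_N}) : wcons x u ord0 = x.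
Proof. by rewrite ffunE unlift_none. Qed.

Lemma wconsS m x (u : {ffun 'I_m -> 'I_N}) i : wcons x u (lift ord0 i) = u i.
Proof. by rewrite ffunE liftK. Qed.

Lemma sum_wcons m (F : {ffun 'I_m.+1 -> 'I_N} -> {poly rat}) :
  \sum_(v : {ffun 'I_m.+1 -> 'I_N}) F v =
  \sum_(x : 'I_N) \sum_(u : {ffun 'I_m -> 'I_N}) F (wcons x u).
Proof.
rewrite pair_big /= (reindex (fun p : 'I_N * {ffun 'I_m -> 'I_N} => wcons p.1 p.2)) //=.
exists (fun v : {ffun 'I_m.+1 -> 'I_N} => (v ord0, [ffun i => v (lift ord0 i)])).
  move=> [x u] _ /=; rewrite wcons0; congr (_, _).
  by apply/ffunP => i; rewrite ffunE wconsS.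
move=> v _; apply/ffunP => r; rewrite ffunE.
by case: unliftP => [j ->|->] //; rewrite ffunE.
Qed.

Lemma content_wcons m x (u : {ffun 'I_m -> 'I_N}) :
  content (wcons x u) = (U_(x) + content u)%MM.
Proof.
rewrite /content big_ord_recl wcons0; congr (_ + _)%MM.
by apply: eq_bigr => i _; rewrite wconsS.
Qed.

Lemma asc_wcons m x (u : {ffun 'I_m -> 'I_N}) :
  asc (wcons x u) = (\sum_(y < N | (x < y)%N) content u y + asc u)%N.
Proof.
rewrite /asc big_ord_recl big_ord_recl /= add0n; congr (_ + _)%N.
  under [RHS]eq_bigr do rewrite /content mnm_sumE.
  rewrite exchange_big /=; apply: eq_bigr => s _.
  under [RHS]eq_bigr do rewrite mnm1E.
  rewrite wcons0 wconsS; case: (ltnP x (u s)) => [lt_xu|le_ux].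
    rewrite (bigD1 (u s)) //= eqxx big1 // => y /andP [_ /negbTE].
    by rewrite eq_sym => ->.
  rewrite big1 // => y lt_xy; case: eqP => // eq_uy.
  by move: lt_xy; rewrite -eq_uy ltnNge le_ux.
apply: eq_bigr => i _; rewrite big_ord_recl /= add0n.
by apply: eq_bigr => j _; rewrite !wconsS.
Qed.

Lemma word_qcountS m al :
  word_qcount m.+1 al = \sum_(x < N | (0 < al x)%N)
      'X ^+ (\sum_(y < N | (x < y)%N) al y)%N * word_qcount m (al - U_(x))%MM.
Proof.
rewrite [RHS]big_mkcond /word_qcount [LHS]big_mkcond /= sum_wcons.
apply: eq_bigr => x _; case: ifP => al_x; last first.
  rewrite big1 // => u _; rewrite content_wcons; case: eqP => // al_u.
  by move: al_x; rewrite -al_u mnmDE mnm1E eqxx.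
rewrite mulr_sumr [RHS]big_mkcond; apply: eq_bigr => u _; rewrite content_wcons.
have -> : ((U_(x) + content u)%MM == al) = (content u == (al - U_(x))%MM).
  apply/eqP/eqP => [<-|->]; first by rewrite addmC addmK.
  rewrite addmC submK //; apply/mnm_lepP => i; rewrite mnm1E.
  by case: eqP => [<-|].
rewrite asc_wcons exprD; case: eqP => // ->.
congr ('X ^+ _ * _); apply: eq_bigr => y lt_xy; rewrite mnmBE mnm1E.
by case: eqP => [eq_xy|]; [move: lt_xy; rewrite eq_xy ltnn | rewrite subn0].
Qed.

Lemma mdeg_sub_mesym1 al (h : {set 'I_N}) : (mesym1 h <= al)%MM ->
  mdeg al = (mdeg (al - mesym1 h)%MM + #|h|)%N.
Proof. by move=> h_al; rewrite -mdeg_mesym1 -mdegD submK. Qed.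

Lemma qpoch_mnm_neq0 al : qpoch_mnm al != 0.
Proof. by apply/prodf_neq0 => i _; apply: qpoch_neq0. Qed.

Lemma qpoch_mnm_sub al (h : {set 'I_N}) : (mesym1 h <= al)%MM ->
  qpoch_mnm al = qpoch_mnm (al - mesym1 h)%MM * \prod_(i in h) (1 - 'X ^+ al i).
Proof.
move=> /mnm_lepP h_al; rewrite /qpoch_mnm [X in _ * X]big_mkcond /= -big_split /=.
apply: eq_bigr => i _; rewrite mnmBE /mesym1 mnmE.
have := h_al i; rewrite /mesym1 mnmE.
case: (i \in h) => /= al_i; last by rewrite subn0 mulr1.
by rewrite -{1}(prednK al_i) qpochS prednK // subn1.
Qed.

Lemma sum_Xn_telescope (M : nat) (f : 'I_M -> nat) :
  \sum_(x < M) ('X ^+ (\sum_(y < M | (x < y)%N) f y)%N * (1 - 'X ^+ f x))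
  = 1 - 'X ^+ (\sum_(y < M) f y)%N :> {poly rat}.
Proof.
elim: M f => [|M IH] f; first by rewrite !big_ord0 expr0 subrr.
have tail_sum (x : 'I_M.+1) : (\sum_(y < M.+1 | (x < y)%N) f y =
    \sum_(y < M | (x < y.+1)%N) f (lift ord0 y))%N.
  by rewrite big_mkcond big_ord_recl ltn0 [RHS]big_mkcond.
under eq_bigr do rewrite tail_sum.
rewrite big_ord_recl big_ord_recl (IH (fun y => f (lift ord0 y))) (eq_bigl predT) //.
by rewrite mulrBr mulr1 -exprD addnC addrC addrA subrK.
Qed.

Lemma word_qcount_qpoch m al : mdeg al = m -> word_qcount m al * qpoch_mnm al = qpoch m.
Proof.
elim: m al => [|m IH] al.
  move=> /eqP; rewrite mdeg_eq0 => /eqP ->.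
  rewrite /qpoch_mnm big1 ?mulr1 => [|i _]; last by rewrite mnm0E qpoch0.
  rewrite /word_qcount qpoch0 (eq_bigl predT) => [|u]; last by rewrite /content big_ord0 eqxx.
  under eq_bigr do rewrite /asc big_ord0 expr0.
  by rewrite sumr_const card_ffun !card_ord expn0.
move=> deg_al; rewrite word_qcountS mulr_suml.
have first_letter (x : 'I_N) : (0 < al x)%N ->
    'X ^+ (\sum_(y < N | (x < y)%N) al y)%N * word_qcount m (al - U_(x))%MM * qpoch_mnm al
    = qpoch m * ('X ^+ (\sum_(y < N | (x < y)%N) al y)%N * (1 - 'X ^+ al x)).
  move=> al_x; have x_al : (mesym1 [set x] <= al)%MM.
    by rewrite mesym1_set1; apply/mnm_lepP => i; rewrite mnm1E; case: eqP => [<-|].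
  have deg_sub : mdeg (al - U_(x))%MM = m.
    by move: (mdeg_sub_mesym1 x_al); rewrite deg_al cards1 mesym1_set1 addn1 => -[].
  rewrite (qpoch_mnm_sub x_al) mesym1_set1 big_set1 mulrA -(mulrA _ (word_qcount _ _)).
  by rewrite IH // -mulrA mulrCA.
rewrite (eq_bigr _ first_letter) -mulr_sumr big_rmcond.
  by rewrite sum_Xn_telescope -mdegE deg_al qpochS.
by move=> x; rewrite -eqn0Ngt => /eqP ->; rewrite expr0 subrr mulr0.
Qed.

End Words.

Section Standardization.
Variables N m : nat.
Implicit Types u : {ffun 'I_m -> 'I_N}.

(* Ties are broken from right to left, as in the reading order of sigmaPF. *)
Definition std_lt u (s r : 'I_m) : bool :=
  (u s < u r)%N || ((u s == u r) && (r < s)%N).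

Lemma std_lt_irr u s : std_lt u s s = false.
Proof. by rewrite /std_lt ltnn eqxx ltnn. Qed.

Lemma std_lt_trans u r s t : std_lt u r s -> std_lt u s t -> std_lt u r t.
Proof.
rewrite /std_lt => /orP[lt_rs|/andP[/eqP eq_rs lt_sr]] /orP[lt_st|/andP[/eqP eq_st lt_ts]].
- by rewrite (ltn_trans lt_rs lt_st).
- by rewrite -eq_st lt_rs.
- by rewrite eq_rs lt_st.
- by rewrite eq_rs eq_st eqxx (ltn_trans lt_ts lt_sr) orbT.
Qed.

Lemma std_lt_total u r s : r != s -> std_lt u r s || std_lt u s r.
Proof.
rewrite /std_lt => neq_rs; case: (ltngtP (u r) (u s)) => [//|_|/val_inj ->]; first by rewrite orbT.
by rewrite eqxx /= orbC -neq_ltn.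
Qed.

Definition std_rank u r : nat := #|[set s | std_lt u s r]|.

Lemma std_rank_lt u r : (std_rank u r < m)%N.
Proof.
have sub_r : [set s | std_lt u s r] \subset [set~ r].
  by apply/subsetP => s; rewrite !inE; apply: contraTneq => ->; rewrite std_lt_irr.
apply: leq_ltn_trans (subset_leq_card sub_r) _; rewrite cardsC1 card_ord.
by rewrite ltn_predL (leq_ltn_trans _ (ltn_ord r)).
Qed.

Lemma std_rank_mono u r s : std_lt u r s -> (std_rank u r < std_rank u s)%N.
Proof.
move=> lt_rs; apply: proper_card; apply/properP; split.
  by apply/subsetP => t; rewrite !inE => /std_lt_trans; apply.
by exists r; rewrite !inE // std_lt_irr.
Qed.

Lemma std_rank_ltE u r s : (std_rank u r < std_rank u s)%N = std_lt u r s.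
Proof.
apply/idP/idP => [lt_rs|]; last exact: std_rank_mono.
have neq_rs : r != s by apply: contraTneq lt_rs => ->; rewrite ltnn.
have /orP[] := std_lt_total u neq_rs => // /std_rank_mono.
by rewrite ltnNge (ltnW lt_rs).
Qed.

Lemma std_rank_inj u : injective (fun r => Ordinal (std_rank_lt u r)).
Proof.
move=> r s /(congr1 val) /= eq_rs; apply/eqP; apply: contraT => neq_rs.
by have /orP[] := std_lt_total u neq_rs => /std_rank_mono; rewrite eq_rs ltnn.
Qed.

Definition std u : {perm 'I_m} := perm (@std_rank_inj u).

Lemma std_ltE u r s : (std u r < std u s)%N = std_lt u r s.
Proof. by rewrite !permE std_rank_ltE. Qed.

Lemma card_ord_lt k : (k <= m)%N -> #|[set j : 'I_m | (j < k)%N]| = k.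
Proof.
move=> le_km; have -> : [set j : 'I_m | (j < k)%N] = widen_ord le_km @: [set: 'I_k].
  apply/setP => j; rewrite !inE; apply/idP/imsetP => [lt_jk|[j' _ ->]]; last by case: j'.
  by exists (Ordinal lt_jk) => //; apply: val_inj.
by rewrite card_imset ?cardsT ?card_ord // => x y /(congr1 val) /= /val_inj.
Qed.

Lemma card_perm_lt (c : {perm 'I_m}) r : #|[set s | (c s < c r)%N]| = c r.
Proof.
have -> : [set s | (c s < c r)%N] = c @^-1: [set j : 'I_m | (j < c r)%N].
  by apply/setP => s; rewrite !inE.
by rewrite card_preimset ?card_ord_lt 1?ltnW //; apply: perm_inj.
Qed.

Lemma std_unique u (c : {perm 'I_m}) :
  (forall r s, std_lt u r s -> (c r < c s)%N) -> c = std u.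
Proof.
move=> c_mono; apply/permP => r; apply: val_inj; rewrite /= permE /std_rank -card_perm_lt.
apply: eq_card => s; rewrite !inE; apply/idP/idP => [lt_sr|]; last exact: c_mono.
have neq_sr : s != r by apply: contraTneq lt_sr => ->; rewrite ltnn.
have /orP[] := std_lt_total u neq_sr => // /c_mono.
by rewrite ltnNge (ltnW lt_sr).
Qed.

Lemma asc_std u : asc u = (\sum_(i < m) \sum_(j < m) ((i < j) && (std u i < std u j)))%N.
Proof.
apply: eq_bigr => i _; apply: eq_bigr => j _; rewrite std_ltE /std_lt.
by case: (ltnP i j) => //= lt_ij; rewrite (ltnNge j i) (ltnW lt_ij) andbF orbF.
Qed.

End Standardization.

Lemma index_rev (T : eqType) (s : seq T) x : uniq s -> x \in s ->
  index x (rev s) = (size s - (index x s).+1)%N.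
Proof.
elim: s => // y s IH /= /andP [y_s uniq_s]; rewrite inE rev_cons -cats1 index_cat.
case: (eqVneq x y) => [->|neq_xy] /= => [_|x_s].
  by rewrite mem_rev (negbTE y_s) eqxx addn0 size_rev subn1.
by rewrite mem_rev x_s IH // subSS.
Qed.

Lemma index_rev_ltE (T : eqType) (s : seq T) x y : uniq s -> x \in s -> y \in s ->
  (index x (rev s) < index y (rev s))%N = (index y s < index x s)%N.
Proof.
move=> uniq_s x_s y_s; rewrite !index_rev //.
have := index_mem x s; have := index_mem y s; rewrite x_s y_s => y_lt x_lt.
by apply/idP/idP => lt_xy; lia.
Qed.

Lemma nondecreasing_eq_descending (W P : nat -> nat) (n : nat) :
  (forall j, (j.+1 < n)%N -> (W j <= W j.+1)%N) ->
  (forall j, (j.+1 < n)%N -> (P j < P j.+1)%N -> (W j < W j.+1)%N) ->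
  (forall j, (j.+1 < n)%N -> P j != P j.+1) ->
  forall j k, (j < k)%N -> (k < n)%N -> (W j <= W k)%N /\ (W j = W k -> (P k < P j)%N).
Proof.
move=> W_le W_lt P_neq j k; elim: k => // k IH lt_jk lt_kn.
have step : W k = W k.+1 -> (P k.+1 < P k)%N.
  move=> eq_W; case: (ltngtP (P k) (P k.+1)) (P_neq k lt_kn) => // /(W_lt k lt_kn).
  by rewrite eq_W ltnn.
move: lt_jk; rewrite ltnS leq_eqVlt => /orP [/eqP ->|lt_jk].
  by split; [exact: W_le | exact: step].
have [le_jk eq_desc] := IH lt_jk (ltnW lt_kn).
split=> [|eq_jk]; first exact: leq_trans le_jk (W_le k lt_kn).
have eq_jk' : W j = W k by apply/eqP; rewrite eqn_leq le_jk eq_jk W_le.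
by apply: ltn_trans (step _) (eq_desc eq_jk'); rewrite -eq_jk'.
Qed.

Section FundamentalCondition.
Variables N m : nat.

Definition wnth (w : {ffun 'I_m -> 'I_N}) j := nth 0%N [seq (w i : nat) | i <- enum 'I_m] j.

Lemma wnthE (w : {ffun 'I_m -> 'I_N}) j (lt_jm : (j < m)%N) : wnth w j = w (Ordinal lt_jm).
Proof.
rewrite /wnth (nth_map (Ordinal lt_jm)) ?size_enum_ord //.
by congr (nat_of_ord (w _)); apply: val_inj; rewrite /= nth_enum_ord.
Qed.

Definition fund_cond (D : nat -> bool) (w : {ffun 'I_m -> 'I_N}) : bool :=
  all (fun j => if D j then (wnth w j < wnth w j.+1)%N else (wnth w j <= wnth w j.+1)%N)
      (iota 0 m.-1).

Lemma fund_condP D (w : {ffun 'I_m -> 'I_N}) :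
  reflect (forall j, (j.+1 < m)%N ->
             if D j then (wnth w j < wnth w j.+1)%N else (wnth w j <= wnth w j.+1)%N)
          (fund_cond D w).
Proof.
have iotaE j : (j \in iota 0 m.-1) = (j.+1 < m)%N by rewrite mem_iota add0n; case: (m).
by apply: (iffP allP) => w_cond j; [rewrite -iotaE | rewrite iotaE]; apply: w_cond.
Qed.

Lemma fundQE D : fundQ N m D = \sum_(w : {ffun 'I_m -> 'I_N} | fund_cond D w) 'X_[content w].
Proof. by apply: eq_bigr => w _; rewrite mprodXE. Qed.

End FundamentalCondition.

Section ZeroAreaPath.
Variables (N : nat) (a : seq nat).
Local Notation m := (size a).

Lemma size_cars (c : {perm 'I_m}) : size (cars c) = m.
Proof. by rewrite size_map size_enum_ord. Qed.

Lemma uniq_cars (c : {perm 'I_m}) : uniq (cars c).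
Proof.
by rewrite (map_inj_uniq (f := fun i => nat_of_ord (c i))) ?enum_uniq // => x y /val_inj /perm_inj.
Qed.

Lemma index_cars (c : {perm 'I_m}) (v : 'I_m) : index (nat_of_ord v) (cars c) = (c^-1)%g v.
Proof.
rewrite /cars -{1}(permKV c v) (index_map (f := fun i => nat_of_ord (c i))) ?index_enum_ord //.
by move=> x y /val_inj /perm_inj.
Qed.

Lemma mem_cars (c : {perm 'I_m}) (v : 'I_m) : nat_of_ord v \in cars c.
Proof. by rewrite /cars -(permKV c v) (map_f (fun i => nat_of_ord (c i))) ?mem_enum. Qed.

Hypothesis a_zero : forall i, nth 0%N a i = 0%N.

Lemma is_PF_zero (c : {perm 'I_m}) : is_PF c.
Proof. by apply/allP => i _; rewrite !a_zero. Qed.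

Lemma dinv_zero (c : {perm 'I_m}) :
  dinv c = (\sum_(i < m) \sum_(j < m) ((i < j) && (c i < c j)))%N.
Proof.
rewrite /dinv -sum1_card big_mkcond /= pair_big /=.
by apply: eq_bigr => [[i j]] _ /=; rewrite inE /= !a_zero eqxx orbF; case: (_ && _).
Qed.

Lemma reading_rows_zero : reading_rows a = rev (iota 0 m).
Proof.
rewrite /reading_rows; set R := (fun i j : nat => _).
have RE i j : R i j = (j <= i)%N by rewrite /R !a_zero ltnn eqxx.
apply: (@sorted_eq _ R).
- by move=> x y z; rewrite !RE => le_yx le_zy; apply: leq_trans le_zy le_yx.
- by move=> x y /andP []; rewrite !RE => le_yx le_xy; apply/eqP; rewrite eqn_leq le_xy.
- by apply: sort_sorted => x y; rewrite !RE leq_total.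
- by rewrite rev_sorted; apply: sub_sorted (iota_sorted 0 m) => x y; rewrite RE.
- by rewrite perm_sort perm_sym perm_rev.
Qed.

Lemma sigmaPF_zero (c : {perm 'I_m}) : sigmaPF c = rev (cars c).
Proof.
rewrite /sigmaPF reading_rows_zero map_rev; congr rev.
by rewrite -{2}(mkseq_nth 0%N (cars c)) size_cars.
Qed.

Lemma pides_zero (c : {perm 'I_m}) j : (j.+1 < m)%N ->
  pides c j = (index j (cars c) < index j.+1 (cars c))%N.
Proof.
move=> lt_jm; rewrite /pides sigmaPF_zero index_rev_ltE ?uniq_cars //.
- exact: (mem_cars c (Ordinal lt_jm)).
- exact: (mem_cars c (Ordinal (ltnW lt_jm))).
Qed.

Definition std_split (u : {ffun 'I_m -> 'I_N}) : {perm 'I_m} * {ffun 'I_m -> 'I_N} :=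
  (std u, [ffun j => u ((std u)^-1%g j)]).

Definition std_merge (p : {perm 'I_m} * {ffun 'I_m -> 'I_N}) : {ffun 'I_m -> 'I_N} :=
  [ffun r => p.2 (p.1 r)].

Lemma std_splitK : cancel std_split std_merge.
Proof. by move=> u; apply/ffunP => r; rewrite !ffunE permK. Qed.

Lemma content_std_split u : content (std_split u).2 = content u.
Proof.
rewrite /content /= (reindex_inj (@perm_inj _ (std u))) /=.
by apply: eq_bigr => r _; rewrite ffunE permK.
Qed.

Lemma fund_cond_std_split u : fund_cond (pides (std_split u).1) (std_split u).2.
Proof.
apply/fund_condP => j lt_j1m; have lt_jm := ltnW lt_j1m.
rewrite pides_zero // (index_cars _ (Ordinal lt_jm)) (index_cars _ (Ordinal lt_j1m)).
rewrite (wnthE _ lt_jm) (wnthE _ lt_j1m) /= !ffunE.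
set r := ((std u)^-1)%g (Ordinal lt_jm); set s := ((std u)^-1)%g (Ordinal lt_j1m).
have : std_lt u r s by rewrite -std_ltE /r /s !permKV.
rewrite /std_lt; case: ifP => lt_rs /orP [lt_u|/andP [/eqP eq_u lt_sr]] //.
- by rewrite ltnNge (ltnW lt_rs) in lt_sr.
- exact: ltnW.
- by rewrite eq_u.
Qed.

Lemma std_merge_mono c w : fund_cond (pides c) w ->
  forall r s, std_lt (std_merge (c, w)) r s -> (c r < c s)%N.
Proof.
(* [P j] is the row of car [j], and [wnth w j] is the letter given to car [j]. *)
move=> /fund_condP w_cond r s; set P := fun j => index j (cars c).
have W_le j : (j.+1 < m)%N -> (wnth w j <= wnth w j.+1)%N.
  by move=> lt_jm; have := w_cond j lt_jm; case: ifP => // _ /ltnW.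
have W_lt j : (j.+1 < m)%N -> (P j < P j.+1)%N -> (wnth w j < wnth w j.+1)%N.
  by move=> lt_jm; have := w_cond j lt_jm; rewrite pides_zero // => + asc_j; rewrite asc_j.
have P_neq j : (j.+1 < m)%N -> P j != P j.+1.
  move=> lt_jm; rewrite /P (index_cars _ (Ordinal (ltnW lt_jm))) (index_cars _ (Ordinal lt_jm)).
  by apply/eqP => /val_inj /perm_inj /(congr1 val) /= /n_Sn.
have PE (x : 'I_m) : P (c x) = x by rewrite /P index_cars permK.
have WE (x : 'I_m) : wnth w (c x) = std_merge (c, w) x.
  by rewrite (wnthE _ (ltn_ord (c x))) ffunE; congr (nat_of_ord (w _)); apply: val_inj.
rewrite /std_lt -!WE; case: (ltngtP (c r) (c s)) => [//|lt_sr|/val_inj /perm_inj ->]; last first.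
  by rewrite !ltnn andbF.
have [le_W eq_desc] := nondecreasing_eq_descending W_le W_lt P_neq lt_sr (ltn_ord (c r)).
case/orP => [|/andP [/eqP eq_u lt_rs]]; first by rewrite ltnNge le_W.
by move: eq_desc; rewrite !WE eq_u !PE => /(_ erefl); rewrite ltnNge (ltnW lt_rs).
Qed.

Lemma std_mergeK c w : fund_cond (pides c) w -> std_split (std_merge (c, w)) = (c, w).
Proof.
move=> w_cond; have std_c : c = std (std_merge (c, w)).
  exact/std_unique/std_merge_mono.
rewrite /std_split -std_c; congr (_, _); apply/ffunP => j.
by rewrite !ffunE /= permKV.
Qed.

Lemma LLT_D_zero : LLT_D N a = word_gen N m.
Proof.
rewrite /LLT_D (eq_bigl predT) => [|c]; last exact: is_PF_zero.
under eq_bigr do rewrite fundQE scaler_sumr.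
rewrite pair_big_dep /= (reindex std_split) /=; last first.
  by exists std_merge => [u _|[c w] /= w_cond]; [exact: std_splitK | exact: std_mergeK].
apply: eq_big => [u|u _]; first exact: fund_cond_std_split.
by rewrite dinv_zero content_std_split -asc_std.
Qed.

End ZeroAreaPath.

Lemma LLTm_word_gen N m : LLTm N m = word_gen N m.
Proof.
case: m => [|m].
  rewrite /LLTm /word_gen (eq_bigr (fun=> 1)) => [|u _]; last first.
    by rewrite /asc /content !big_ord0 expr0 scale1r mpolyX0.
  by rewrite sumr_const card_ffun !card_ord expn0.
rewrite /LLTm -{2}(size_nseq m.+1 0%N) LLT_D_zero // => i.
by rewrite nth_nseq; case: ifP.
Qed.

Lemma sum_signed_prod (R : comPzRingType) (N : nat) (y : 'I_N -> R) :
  \sum_(h : {set 'I_N}) (-1) ^+ #|h| * \prod_(i in h) y i = \prod_(i < N) (1 - y i).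
Proof.
rewrite (eq_bigr (fun i => - y i + 1)) => [|i _]; last by rewrite addrC.
rewrite bigA_distr; apply: eq_bigr => h _.
rewrite [RHS](bigID (mem h)) /= [X in _ = _ * X]big1 ?mulr1 => [|i /negbTE -> //].
rewrite [in RHS](eq_bigr (fun i => -1 * y i)) => [|i ->]; last by rewrite mulN1r.
by rewrite big_split /= prodr_const.
Qed.

Lemma sum_nat_pred1 (R : nmodType) (G : nat -> R) c b :
  \sum_(0 <= k < b | c == k) G k = if (c < b)%N then G c else 0.
Proof.
elim: b => [|b IH]; first by rewrite big_geq.
rewrite big_mkcond big_nat_recr //= -big_mkcond IH ltnS.
by case: (ltngtP c b) => [lt_cb|lt_bc|->]; rewrite ?addr0 ?add0r ?lt_cb ?eqxx.
Qed.

Lemma sum_alternating_elem (R : comPzRingType) (N n : nat) (y : 'I_N -> R) :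
  (forall h : {set 'I_N}, (n < #|h|)%N -> \prod_(i in h) y i = 0) ->
  \sum_(1 <= k < n.+1) (-1) ^+ k.-1 * \sum_(h : {set 'I_N} | #|h| == k) \prod_(i in h) y i
  = 1 - \prod_(i < N) (1 - y i).
Proof.
move=> y_large; rewrite -sum_signed_prod.
have by_card : \sum_(h : {set 'I_N}) (-1) ^+ #|h| * \prod_(i in h) y i =
    \sum_(0 <= k < n.+1) (-1) ^+ k * \sum_(h : {set 'I_N} | #|h| == k) \prod_(i in h) y i.
  under [RHS]eq_bigr do rewrite mulr_sumr big_mkcond /=.
  rewrite exchange_big /=; apply: eq_bigr => h _.
  rewrite -big_mkcond /= sum_nat_pred1 ltnS.
  by case: leqP => // /y_large ->; rewrite mulr0.
rewrite by_card [X in _ = 1 - X]big_nat_recl // expr0 mul1r (big_pred1 set0) => [|h]; last first.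
  by rewrite cards_eq0.
rewrite big_set0 big_add1 /= opprD addrA subrr add0r -sumrN.
by apply: eq_bigr => k _; rewrite exprS mulN1r mulNr opprK.
Qed.

Section Coefficients.
Variable N : nat.
Implicit Types (al : 'X_{1..N}) (h : {set 'I_N}).

Lemma mcoeffMX_if (p : {mpoly {poly rat}[N]}) s al :
  (p * 'X_[s])@_al = if (s <= al)%MM then p@_(al - s)%MM else 0.
Proof.
case: ifP => [le_s|not_le]; first by rewrite -{1}(submK le_s) addmC mcoeffMX.
apply/eqP; apply: contraFT not_le => nz.
have : al \in msupp (p * 'X_[s]) by rewrite mcoeff_msupp.
by rewrite (perm_mem (msuppMX p s)) => /mapP [m' _ ->]; apply: lem_addr.
Qed.

Lemma mcoeff_elemsym_word_gen k j al : (elemsym N k * word_gen N j)@_al =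
  \sum_(h : {set 'I_N} | #|h| == k)
     (if (mesym1 h <= al)%MM then word_qcount j (al - mesym1 h)%MM else 0).
Proof.
rewrite /elemsym mesymE mulr_suml raddf_sum; apply: eq_bigr => h _.
by rewrite mulrC -mcoeff_word_gen; apply: mcoeffMX_if.
Qed.

Lemma prod_1subXn_eq0 al h : ~~ (mesym1 h <= al)%MM ->
  \prod_(i in h) (1 - 'X ^+ al i) = 0 :> {poly rat}.
Proof.
move=> not_le; apply/eqP; apply: contraNT not_le => /prodf_neq0 nz.
apply/mnm_lepP => i; rewrite /mesym1 mnmE; case: (boolP (i \in h)) => //= i_h.
by rewrite lt0n; apply: contra (nz i i_h) => /eqP ->; rewrite expr0 subrr.
Qed.

Lemma word_qcount_sub_qpoch al h :
  (if (mesym1 h <= al)%MM then word_qcount (mdeg al - #|h|) (al - mesym1 h)%MM else 0)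
    * qpoch_mnm al
  = qpoch (mdeg al - #|h|) * \prod_(i in h) (1 - 'X ^+ al i).
Proof.
case: ifP => [h_al|/negbT /prod_1subXn_eq0 ->]; last by rewrite mul0r mulr0.
rewrite (qpoch_mnm_sub h_al) mulrA word_qcount_qpoch //.
by rewrite (mdeg_sub_mesym1 h_al) addnK.
Qed.

Lemma sum_alternating_1subXn n al : mdeg al = n ->
  \sum_(1 <= k < n.+1) (-1) ^+ k.-1 *
     \sum_(h : {set 'I_N} | #|h| == k) \prod_(i in h) (1 - 'X ^+ al i)
  = 1 - 'X ^+ n :> {poly rat}.
Proof.
move=> deg_al; rewrite sum_alternating_elem => [|h lt_nh].
  by under eq_bigr do rewrite opprB addrC subrK; rewrite prodrXr -mdegE deg_al.
apply: prod_1subXn_eq0; apply: contraL lt_nh => /mdeg_sub_mesym1.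
by rewrite deg_al => ->; rewrite -leqNgt leq_addl.
Qed.

Lemma word_qcount_recursion n al : (1 <= n)%N ->
  word_qcount n al = \sum_(1 <= k < n.+1)
     ((-1) ^+ k.-1 * qpoch k.-1 * qbinom n.-1 k.-1) *
     \sum_(h : {set 'I_N} | #|h| == k)
       (if (mesym1 h <= al)%MM then word_qcount (n - k) (al - mesym1 h)%MM else 0).
Proof.
move=> n_gt0; have [deg_al|deg_al] := eqVneq (mdeg al) n; last first.
  rewrite word_qcount_eq0 // big_nat_cond big1 // => k /andP [/andP [_ lt_kn] _].
  rewrite big1 ?mulr0 // => h /eqP card_h; case: ifP => // h_al.
  rewrite word_qcount_eq0 //; apply: contra deg_al => /eqP deg_sub.
  by rewrite (mdeg_sub_mesym1 h_al) deg_sub card_h subnK.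
have term k : (1 <= k < n.+1)%N ->
    (-1) ^+ k.-1 * qpoch k.-1 * qbinom n.-1 k.-1 *
      (\sum_(h : {set 'I_N} | #|h| == k)
        (if (mesym1 h <= al)%MM then word_qcount (n - k) (al - mesym1 h)%MM else 0))
      * qpoch_mnm al
    = (-1) ^+ k.-1 * qpoch n.-1 *
      \sum_(h : {set 'I_N} | #|h| == k) \prod_(i in h) (1 - 'X ^+ al i).
  move=> bounds_k; rewrite -mulrA mulr_suml.
  under eq_bigr => h /eqP card_h do rewrite -deg_al -card_h word_qcount_sub_qpoch card_h deg_al.
  by rewrite -mulr_sumr -(qpoch_qbinom_pred bounds_k) !mulrA.
apply: (mulIf (qpoch_mnm_neq0 al)); rewrite word_qcount_qpoch // mulr_suml.
rewrite big_nat_cond; under eq_bigr => k /andP [bounds_k _] do rewrite term //.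
rewrite -big_nat_cond; under eq_bigr do rewrite mulrAC.
rewrite -mulr_suml sum_alternating_1subXn //.
by case: n n_gt0 {deg_al term} => // n _; rewrite qpochS mulrC.
Qed.

End Coefficients.

Unset Implicit Arguments.

Theorem theorem3p1 (n : nat) (hn : (2 <= n)%N) (N : nat) :
  LLTm N n =
  \sum_(1 <= k < n.+1)
     ((-1) ^+ k.-1 * qpoch k.-1 * qbinom n.-1 k.-1) *: (elemsym N k * LLTm N (n - k)).
Proof.
rewrite LLTm_word_gen; under eq_bigr do rewrite LLTm_word_gen.
apply/mpolyP => al; rewrite mcoeff_word_gen raddf_sum (word_qcount_recursion al (ltnW hn)).
by apply: eq_bigr => k _; rewrite -mcoeff_elemsym_word_gen; symmetry; apply: mcoeffZ.
Qed.
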